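(* Let $\sigma>0$ and define the even function $k:\mathbb{R}\to\mathbb{R}$ by \[ k(r)=\operatorname{erfc}\!\left(\frac{r}{\sigma\sqrt{2}}\right)-\frac{1}{\sqrt{\pi}}\left(\frac{r}{\sigma\sqrt{2}}\right)E_1\!\left(\frac{r^2}{2\sigma^2}\right)\quad (r>0),\qquad k(0)=1,\qquad k(-r)=k(r), \] where $\operatorname{erfc}(x)=1-\frac{1}{\sqrt{\pi}}\int_{-x}^{x}e^{-s^2}ds$ and $E_1(z)=\int_z^\infty \frac{e^{-s}}{s}\,ds$. Then for $t\neq 0$, \[ \mathcal{F}[k](t)=\int_{-\infty}^{\infty}k(r)e^{\mathbf{i} rt}\,dr=\frac{2}{t\sqrt{\pi}}\int_0^{\infty}E_1(r^2)\sin(\sigma\sqrt{2}\,t r)\,dr. \]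
   Context: This $k$ is the kernel $k(r)=\int_0^\infty\max\{0,1-|r|/x\}\,dF(x)$ associated with the half-normal distribution with scale $\sigma$ (density $\frac{\sqrt2}{\sigma\sqrt\pi}e^{-x^2/(2\sigma^2)}$ on $(0,\infty)$). *)

From Stdlib Require Import Reals.
From Coquelicot Require Import Coquelicot.
Open Scope R_scope.

Definition erfc (x : R) : R :=
  1 - / sqrt PI * RInt (fun s => exp (- s ^ 2)) (- x) x.

(* E_1(z) = int_z^oo e^{-s}/s ds  (improper integral; used only for z > 0) *)
Definition E_1 (z : R) : R :=
  RInt_gen (fun s => exp (- s) / s) (at_point z) (Rbar_locally p_infty).

(* The even kernel k (depending on the scale sigma > 0):
   k(r) = erfc(|r|/(sigma sqrt 2)) - (1/sqrt pi) (|r|/(sigma sqrt 2)) E_1(r^2/(2 sigma^2))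
   for r <> 0, and k(0) = 1.  Using |r| encodes k(-r) = k(r). *)
Definition kernel (sigma r : R) : R :=
  if Req_EM_T r 0 then 1
  else
    let a := Rabs r / (sigma * sqrt 2) in
    erfc a - / sqrt PI * a * E_1 (r ^ 2 / (2 * sigma ^ 2)).

From Stdlib Require Import Reals Lra.
From Coquelicot Require Import Coquelicot.
Open Scope R_scope.

(* With [c = sigma sqrt 2] the kernel is [k r = p (|r| / c)] for the profile
   [p a = erfc a - a E_1 (a^2) / sqrt pi].  The profile is continuous (at 0 because
   [a E_1 (a^2) = O(a ln a)]), satisfies [p' a = - E_1 (a^2) / sqrt pi] for [a <> 0], and
   decays like [e^(-a)]; the decay needs [int_0^oo e^(-s^2) ds = sqrt pi / 2], obtained from
   the classical fact that [G x ^ 2 + int_0^1 e^(-x^2 (1+u^2)) / (1+u^2) du] has zero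
   derivative, [G] being the Gaussian primitive.  Hence the Fourier integral of [k] converges,
   its sine part vanishes by oddness, its cosine part is [2 c int_0^oo p a cos (w a) da] with
   [w = c t], and integrating [E_1 (a^2) sin (w a) = - sqrt pi p' a sin (w a)] by parts
   gives [int_0^oo E_1 (a^2) sin (w a) da = sqrt pi w int_0^oo p a cos (w a) da]. *)

(** * Riemann integrals and limits on the real line *)

(* An equation whose left side is an [RInt] lives in Coquelicot's normed-module carrier,
   where [ring] finds no ring structure; moving everything to the left side fixes that. *)
Ltac ring_R := apply Rminus_diag_uniq; ring.

(* Instances on [R] of Coquelicot lemmas whose normed-module parameter is not inferred
   from [f : R -> R]. *)
Lemma ex_derive_continuous_R (f : R -> R) x : ex_derive f x -> continuous f x.
Proof. exact (ex_derive_continuous (V := R_NormedModule) f x). Qed.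

Lemma ex_RInt_continuous_R (f : R -> R) a b :
  (forall x, Rmin a b <= x <= Rmax a b -> continuous f x) -> ex_RInt f a b.
Proof. exact (ex_RInt_continuous (V := R_CompleteNormedModule) f a b). Qed.

Lemma RInt_correct_R (f : R -> R) a b : ex_RInt f a b -> is_RInt f a b (RInt f a b).
Proof. exact (RInt_correct (V := R_CompleteNormedModule) f a b). Qed.

Lemma RInt_Chasles_R (f : R -> R) a b c :
  ex_RInt f a b -> ex_RInt f b c -> RInt f a b + RInt f b c = RInt f a c.
Proof. exact (RInt_Chasles (V := R_CompleteNormedModule) f a b c). Qed.

Lemma RInt_scal_R (f : R -> R) a b k :
  ex_RInt f a b -> RInt (fun x => k * f x) a b = k * RInt f a b.
Proof. exact (RInt_scal (V := R_CompleteNormedModule) f a b k). Qed.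

Lemma is_RInt_derive_R (f df : R -> R) a b :
  (forall x, Rmin a b <= x <= Rmax a b -> is_derive f x (df x)) ->
  (forall x, Rmin a b <= x <= Rmax a b -> continuous df x) ->
  is_RInt df a b (f b - f a).
Proof. exact (is_RInt_derive (V := R_CompleteNormedModule) f df a b). Qed.

Lemma RInt_derive_R (f df : R -> R) a b :
  (forall x, Rmin a b <= x <= Rmax a b -> is_derive f x (df x)) ->
  (forall x, Rmin a b <= x <= Rmax a b -> continuous df x) ->
  RInt df a b = f b - f a.
Proof.
  intros Hd Hc. apply (is_RInt_unique (V := R_CompleteNormedModule)).
  exact (is_RInt_derive_R f df a b Hd Hc).
Qed.

Lemma ex_RInt_continuous_ge (f : R -> R) a u v :
  (forall x, a <= x -> continuous f x) -> a <= u -> a <= v -> ex_RInt f u v.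
Proof.
  intros Hc Hu Hv. apply ex_RInt_continuous_R. intros x Hx. apply Hc.
  generalize (Rmin_glb u v a Hu Hv). lra.
Qed.

Lemma ex_RInt_continuous_pos (f : R -> R) a b :
  0 < a -> 0 < b -> (forall x, 0 < x -> continuous f x) -> ex_RInt f a b.
Proof.
  intros Ha Hb Hc. apply ex_RInt_continuous_R. intros x Hx. apply Hc.
  generalize (Rmin_glb_lt a b 0 Ha Hb). lra.
Qed.

Lemma is_RInt_RInt_diff (f : R -> R) a b :
  (forall x, continuous f x) -> is_RInt f a b (RInt f 0 b - RInt f 0 a).
Proof.
  intros Hc. assert (Hex : forall u v, ex_RInt f u v) by
    (intros u v; apply ex_RInt_continuous_R; intros; apply Hc).
  rewrite <- (RInt_Chasles_R f 0 a b) by auto.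
  rewrite Rplus_minus_l. apply RInt_correct_R, Hex.
Qed.

Lemma is_derive_RInt_0 (f : R -> R) x :
  (forall y, continuous f y) -> is_derive (fun y => RInt f 0 y) x (f x).
Proof.
  intros Hc. apply (is_derive_RInt f (fun y => RInt f 0 y) 0 x); [| apply Hc].
  apply filter_forall. intros b. apply RInt_correct_R, ex_RInt_continuous_R. intros; apply Hc.
Qed.

Lemma RInt_opp_upper (f : R -> R) x :
  (forall y, continuous f y) -> RInt f 0 (- x) = - RInt (fun y => f (- y)) 0 x.
Proof.
  intros Hc.
  assert (H := is_RInt_comp_opp f 0 x _
    (RInt_correct_R f (- 0) (- x) (ex_RInt_continuous_R _ _ _ (fun y _ => Hc y)))).
  apply (is_RInt_unique (V := R_CompleteNormedModule)) in H.
  rewrite Ropp_0 in H. rewrite <- H.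
  rewrite (RInt_ext _ (fun y => -1 * f (- y))).
  2: { intros y _. change (- f (- y) = -1 * f (- y)). ring. }
  rewrite RInt_scal_R; [ring_R |].
  apply ex_RInt_continuous_R. intros y _.
  apply (continuous_comp Ropp f); [apply ex_derive_continuous_R; auto_derive; auto | apply Hc].
Qed.

Lemma RInt_rescale (h : R -> R) (c a b : R) :
  0 < c -> (forall x, continuous h x) ->
  RInt (fun r => h (r / c)) a b = c * RInt h (a / c) (b / c).
Proof.
  intros Hc Hh.
  assert (Hex : forall u v, ex_RInt h u v) by
    (intros; apply ex_RInt_continuous_R; intros; apply Hh).
  replace (a / c) with (/ c * a + 0) by (unfold Rdiv; ring).
  replace (b / c) with (/ c * b + 0) by (unfold Rdiv; ring).
  rewrite <- (RInt_comp_lin (V := R_CompleteNormedModule) h (/ c) 0 a b (Hex _ _)).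
  rewrite <- RInt_scal_R.
  - apply RInt_ext. intros y _. change (h (y / c) = c * (/ c * h (/ c * y + 0))).
    replace (/ c * y + 0) with (y / c) by (unfold Rdiv; ring). field. lra.
  - apply (ex_RInt_comp_lin (V := R_NormedModule)), Hex.
Qed.

Lemma eq_of_is_derive_0 (f : R -> R) (a b : R) : (forall x, is_derive f x 0) -> f a = f b.
Proof.
  intros Hd.
  assert (H := RInt_derive_R f (fun _ => 0) a b (fun x _ => Hd x)
                 (fun x _ => continuous_const 0 x)).
  rewrite (RInt_const (V := R_CompleteNormedModule)) in H.
  change (scal (b - a) 0) with ((b - a) * 0) in H. lra.
Qed.

Lemma exp_le_compat x y : x <= y -> exp x <= exp y.
Proof. intros [Hlt | ->]; [left; apply exp_increasing, Hlt | right; reflexivity]. Qed.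

Lemma ln_lt_id y : 0 < y -> ln y < y.
Proof.
  intros Hy. rewrite <- (ln_exp y) at 2. apply ln_increasing; [exact Hy |].
  generalize (exp_ineq1_le y). lra.
Qed.

Lemma mul_ln_sqr_ge b : 0 < b -> - (4 * sqrt b) <= b * ln (b ^ 2).
Proof.
  intros Hb. set (s := sqrt b).
  assert (Hs : 0 < s) by (apply sqrt_lt_R0, Hb).
  assert (Hss : s * s = b) by (apply sqrt_sqrt; lra).
  assert (Hln : ln (b ^ 2) = 4 * ln s).
  { rewrite <- Hss. replace ((s * s) ^ 2) with (s ^ 4) by ring.
    rewrite ln_pow by exact Hs. simpl. ring. }
  assert (Hinv : - ln s < / s).
  { rewrite <- ln_Rinv by exact Hs. apply ln_lt_id, Rinv_0_lt_compat, Hs. }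
  rewrite Hln, <- Hss.
  replace (s * s * (4 * ln s)) with (- (4 * (s * s) * - ln s)) by ring.
  apply Ropp_le_contravar. apply Rle_trans with (4 * (s * s) * / s).
  - apply Rmult_le_compat_l; [nra | lra].
  - right. field. lra.
Qed.

Lemma is_lim_exp_opp : is_lim (fun x => exp (- x)) p_infty 0.
Proof.
  apply (is_lim_comp exp Ropp p_infty 0 m_infty).
  - exact is_lim_exp_m.
  - exact (filterlim_Rbar_opp p_infty).
  - exists 0. discriminate.
Qed.

Lemma is_lim_exp_opp_sqr : is_lim (fun x => exp (- x ^ 2)) p_infty 0.
Proof.
  apply (is_lim_le_le_loc (fun _ => 0) (fun x => exp (- x))).
  - exists 1. intros x Hx. split; [left; apply exp_pos | apply exp_le_compat; nra].
  - apply is_lim_const.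
  - exact is_lim_exp_opp.
Qed.

Lemma is_lim_div_pos (c : R) : 0 < c -> is_lim (fun x => x / c) p_infty p_infty.
Proof.
  intros Hc P [M HM]. exists (M * c). intros x Hx. apply HM.
  apply (Rmult_lt_reg_r c); auto. unfold Rdiv. rewrite Rmult_assoc, Rinv_l; lra.
Qed.

Lemma is_lim_m_infty_of_opp (F : R -> R) (l : R) :
  is_lim (fun x => F (- x)) p_infty l -> is_lim F m_infty l.
Proof.
  intros H. apply (is_lim_ext (fun x => F (- - x))).
  { intros x. now rewrite Ropp_involutive. }
  exact (filterlim_comp _ _ _ Ropp (fun x => F (- x)) _ _ _ (filterlim_Rbar_opp m_infty) H).
Qed.

Lemma is_lim_RInt_exp_opp (k a : R) :
  is_lim (fun x => RInt (fun s => k * exp (- s)) a x) p_infty (k * exp (- a)).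
Proof.
  apply (is_lim_ext (fun x => k * (exp (- a) - exp (- x)))).
  - intros x. symmetry. rewrite (RInt_derive_R (fun s => - k * exp (- s))); [ring | |].
    + intros s _. auto_derive; [exact I | ring].
    + intros s _. apply ex_derive_continuous_R. auto_derive. exact I.
  - replace (k * exp (- a)) with (k * (exp (- a) - 0)) by ring.
    apply (is_lim_scal_l _ k p_infty (exp (- a) - 0)).
    apply is_lim_minus'; [apply is_lim_const | exact is_lim_exp_opp].
Qed.

(** * Improper integrals *)

Lemma is_RInt_gen_primitive {Fa Fb : (R -> Prop) -> Prop} {FFa : Filter Fa} {FFb : Filter Fb}
  (f F : R -> R) (la lb : R) :
  filter_prod Fa Fb (fun ab => is_RInt f (fst ab) (snd ab) (F (snd ab) - F (fst ab))) ->
  filterlim F Fa (locally la) -> filterlim F Fb (locally lb) ->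
  is_RInt_gen f Fa Fb (lb - la).
Proof.
  intros Hint Ha Hb P [eps Heps]. unfold filtermapi.
  assert (Ha' := Ha _ (locally_ball la (pos_div_2 eps))).
  assert (Hb' := Hb _ (locally_ball lb (pos_div_2 eps))).
  apply (filter_imp (fun ab => is_RInt f (fst ab) (snd ab) (F (snd ab) - F (fst ab)) /\
                               ball la (eps / 2) (F (fst ab)) /\ ball lb (eps / 2) (F (snd ab)))).
  - intros [a b] (HI & Hla & Hlb). exists (F b - F a). split; [exact HI |].
    apply Heps. change (Rabs (F b - F a - (lb - la)) < eps).
    change (Rabs (F a - la) < eps / 2) in Hla. change (Rabs (F b - lb) < eps / 2) in Hlb.
    apply Rabs_def2 in Hla. apply Rabs_def2 in Hlb. apply Rabs_def1; lra.
  - apply filter_and; [exact Hint |].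
    unfold filtermap in Ha', Hb'.
    apply (Filter_prod _ _ _ _ _ Ha' Hb'). intros a b Hla Hlb. split; assumption.
Qed.

Lemma is_RInt_gen_pair {Fa Fb : (R -> Prop) -> Prop} {FFa : Filter Fa} {FFb : Filter Fb}
  (f g : R -> R) (lf lg : R) :
  is_RInt_gen f Fa Fb lf -> is_RInt_gen g Fa Fb lg ->
  is_RInt_gen (V := C_R_NormedModule) (fun x => (f x, g x) : C) Fa Fb ((lf, lg) : C).
Proof.
  intros Hf Hg P [eps Heps]. unfold filtermapi.
  apply (filter_imp (fun ab =>
    (exists y, is_RInt f (fst ab) (snd ab) y /\ ball lf eps y) /\
    (exists y, is_RInt g (fst ab) (snd ab) y /\ ball lg eps y))).
  - intros ab [[yf [Hyf Bf]] [yg [Hyg Bg]]]. exists ((yf, yg) : C). split.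
    + apply (is_RInt_fct_extend_pair (U := R_NormedModule) (V := R_NormedModule)); assumption.
    + apply Heps. split; assumption.
  - apply filter_and; [apply Hf | apply Hg]; apply locally_ball.
Qed.

Lemma is_lim_RInt_dominated (f g : R -> R) (a lg : R) :
  (forall x, a <= x -> continuous f x) -> (forall x, a <= x -> continuous g x) ->
  (exists M, forall x, M <= x -> Rabs (f x) <= g x) ->
  is_lim (fun x => RInt g a x) p_infty lg ->
  exists l : R, is_lim (fun x => RInt f a x) p_infty l.
Proof.
  intros Hf Hg [M HM] Hl.
  destruct (proj1 (filterlim_locally_cauchy (U := R_CompleteSpace) (F := Rbar_locally p_infty)
                     (fun x => RInt f a x))) as [l Hlim]; [| exists l; exact Hlim].
  intros eps.
  destruct (Hl _ (locally_ball lg (pos_div_2 eps))) as [N HN].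
  exists (fun x => Rmax a (Rmax M N) < x). split; [exists (Rmax a (Rmax M N)); auto |].
  assert (Hcauchy : forall u v, Rmax a (Rmax M N) < u -> u <= v ->
                                Rabs (RInt f a v - RInt f a u) < eps).
  { intros u v Hu Huv.
    assert (Hau : a <= u) by (generalize (Rmax_l a (Rmax M N)); lra).
    assert (HMu : M <= u) by (generalize (Rmax_r a (Rmax M N)) (Rmax_l M N); lra).
    assert (HNu : N < u) by (generalize (Rmax_r a (Rmax M N)) (Rmax_r M N); lra).
    assert (Bu := HN u HNu). assert (Bv := HN v ltac:(lra)).
    change (Rabs (RInt g a u - lg) < eps / 2) in Bu.
    change (Rabs (RInt g a v - lg) < eps / 2) in Bv.
    rewrite <- (RInt_Chasles_R g a u v) in Bv by (apply (ex_RInt_continuous_ge _ a); auto; lra).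
    rewrite <- (RInt_Chasles_R f a u v) by (apply (ex_RInt_continuous_ge _ a); auto; lra).
    rewrite Rplus_minus_l.
    apply Rle_lt_trans with (RInt g u v).
    - apply Rle_trans with (RInt (fun x => Rabs (f x)) u v).
      + apply abs_RInt_le; auto. apply (ex_RInt_continuous_ge _ a); auto; lra.
      + apply RInt_le; auto.
        * apply (ex_RInt_continuous_ge _ a); try lra.
          intros x Hx. apply continuous_Rabs_comp, Hf, Hx.
        * apply (ex_RInt_continuous_ge _ a); auto; lra.
        * intros x Hx. apply HM. lra.
    - apply Rabs_def2 in Bu. apply Rabs_def2 in Bv. lra. }
  intros u v Hu Hv. change (Rabs (RInt f a v - RInt f a u) < eps).
  destruct (Rle_or_lt u v) as [Huv | Hvu].
  - apply Hcauchy; assumption.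
  - rewrite Rabs_minus_sym. apply Hcauchy; [assumption | lra].
Qed.

Lemma is_lim_RInt_abs_le (f g : R -> R) (a lf lg : R) :
  (forall x, a <= x -> continuous f x) -> (forall x, a <= x -> continuous g x) ->
  (forall x, a <= x -> Rabs (f x) <= g x) ->
  is_lim (fun x => RInt f a x) p_infty lf -> is_lim (fun x => RInt g a x) p_infty lg ->
  Rabs lf <= lg.
Proof.
  intros Hf Hg Hfg Hlf Hlg.
  change (Rbar_le (Rabs lf) lg).
  apply (is_lim_le_loc (fun x => Rabs (RInt f a x)) (fun x => RInt g a x) p_infty).
  - exists a. intros x Hx.
    apply Rle_trans with (RInt (fun y => Rabs (f y)) a x).
    + apply abs_RInt_le; [lra |]. apply (ex_RInt_continuous_ge _ a); auto; lra.
    + apply RInt_le; [lra | | |].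
      * apply (ex_RInt_continuous_ge _ a); try lra.
        intros y Hy. apply continuous_Rabs_comp, Hf, Hy.
      * apply (ex_RInt_continuous_ge _ a); auto; lra.
      * intros y Hy. apply Hfg. lra.
  - apply (is_lim_comp_continuous _ Rabs); [exact Hlf | apply continuous_Rabs].
  - exact Hlg.
Qed.

Lemma is_RInt_gen_even (h : R -> R) (l : R) :
  (forall x, continuous h x) -> (forall x, h (- x) = h x) ->
  is_lim (fun x => RInt h 0 x) p_infty l ->
  is_RInt_gen h (Rbar_locally m_infty) (Rbar_locally p_infty) (2 * l).
Proof.
  intros Hc Heven Hl. replace (2 * l) with (l - - l) by ring.
  apply (is_RInt_gen_primitive h (fun x => RInt h 0 x)).
  - apply filter_forall. intros [a b]. apply is_RInt_RInt_diff, Hc.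
  - apply is_lim_m_infty_of_opp.
    apply (is_lim_ext (fun x => - RInt h 0 x)); [| exact (is_lim_opp _ _ _ Hl)].
    intros x. rewrite RInt_opp_upper by exact Hc. f_equal.
    apply RInt_ext. intros y _. now rewrite Heven.
  - exact Hl.
Qed.

Lemma is_RInt_gen_odd (h : R -> R) (l : R) :
  (forall x, continuous h x) -> (forall x, h (- x) = - h x) ->
  is_lim (fun x => RInt h 0 x) p_infty l ->
  is_RInt_gen h (Rbar_locally m_infty) (Rbar_locally p_infty) 0.
Proof.
  intros Hc Hodd Hl. replace 0 with (l - l) by ring.
  apply (is_RInt_gen_primitive h (fun x => RInt h 0 x)).
  - apply filter_forall. intros [a b]. apply is_RInt_RInt_diff, Hc.
  - apply is_lim_m_infty_of_opp.
    apply (is_lim_ext (fun x => RInt h 0 x)); [| exact Hl].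
    intros x. rewrite RInt_opp_upper by exact Hc.
    rewrite (RInt_ext (fun y => h (- y)) (fun y => -1 * h y)) by (intros y _; rewrite Hodd; ring_R).
    rewrite RInt_scal_R; [ring_R |]. apply ex_RInt_continuous_R. intros; apply Hc.
  - exact Hl.
Qed.

Lemma is_lim_RInt_rescale (h : R -> R) (c l : R) :
  0 < c -> (forall x, continuous h x) ->
  is_lim (fun x => RInt h 0 x) p_infty l ->
  is_lim (fun x => RInt (fun r => h (r / c)) 0 x) p_infty (c * l).
Proof.
  intros Hc Hh Hl.
  apply (is_lim_ext (fun x => c * RInt h 0 (x / c))).
  - intros x. now rewrite RInt_rescale, Rdiv_0_l.
  - apply (is_lim_scal_l (fun x => RInt h 0 (x / c)) c p_infty l).
    apply (is_lim_comp (fun y => RInt h 0 y) (fun x => x / c) p_infty l p_infty Hl).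
    + exact (is_lim_div_pos c Hc).
    + exists 0. discriminate.
Qed.

(** * The Gaussian integral *)

Definition gauss_int (x : R) : R := RInt (fun s => exp (- s ^ 2)) 0 x.

Definition gauss_aux (x : R) : R :=
  RInt (fun u => exp (- x ^ 2 * (1 + u ^ 2)) / (1 + u ^ 2)) 0 1.

Lemma gauss_int_0 : gauss_int 0 = 0.
Proof. exact (RInt_point (V := R_CompleteNormedModule) 0 (fun s => exp (- s ^ 2))). Qed.

Lemma continuous_gauss x : continuous (fun s => exp (- s ^ 2)) x.
Proof. apply ex_derive_continuous_R. auto_derive. exact I. Qed.

Lemma is_derive_gauss_int x : is_derive gauss_int x (exp (- x ^ 2)).
Proof. exact (is_derive_RInt_0 _ x continuous_gauss). Qed.

Lemma gauss_int_opp x : gauss_int (- x) = - gauss_int x.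
Proof.
  unfold gauss_int. rewrite RInt_opp_upper by apply continuous_gauss. f_equal.
  apply RInt_ext. intros y _. now rewrite <- Rsqr_pow2, <- Rsqr_neg, Rsqr_pow2.
Qed.

Lemma gauss_int_nonneg x : 0 <= x -> 0 <= gauss_int x.
Proof.
  intros Hx. apply RInt_ge_0; [exact Hx | |].
  - apply ex_RInt_continuous_R. intros; apply continuous_gauss.
  - intros; left; apply exp_pos.
Qed.

Lemma gauss_int_abs_le x : Rabs (gauss_int x) <= Rabs x.
Proof.
  assert (Hpos : forall y, 0 <= y -> Rabs (gauss_int y) <= y).
  { intros y Hy. rewrite Rabs_pos_eq by (apply gauss_int_nonneg, Hy).
    replace y with (RInt (fun _ => 1) 0 y) at 2.
    2: { rewrite (RInt_const (V := R_CompleteNormedModule)).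
         change ((y - 0) * 1 = y). ring. }
    apply RInt_le; [exact Hy | | apply ex_RInt_const |].
    - apply ex_RInt_continuous_R. intros; apply continuous_gauss.
    - intros s _. rewrite <- exp_0. apply exp_le_compat. nra. }
  destruct (Rle_or_lt 0 x) as [Hx | Hx].
  - rewrite (Rabs_pos_eq x Hx). apply Hpos, Hx.
  - rewrite <- (Ropp_involutive x), gauss_int_opp, !Rabs_Ropp.
    rewrite (Rabs_left x Hx). apply Hpos. lra.
Qed.

Lemma continuity_2d_pt_gauss_aux_deriv x u :
  continuity_2d_pt (fun x u => - 2 * x * exp (- x ^ 2 * (1 + u ^ 2))) x u.
Proof.
  apply continuity_2d_pt_mult.
  - apply continuity_2d_pt_mult; [apply continuity_2d_pt_const | apply continuity_2d_pt_id1].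
  - apply continuity_1d_2d_pt_comp with (f := exp) (g := fun a b => - a ^ 2 * (1 + b ^ 2)).
    + apply continuity_pt_filterlim, continuous_exp.
    + apply (continuity_2d_pt_ext (fun a b => - (a * a) * (1 + b * b))); [intros; ring |].
      apply continuity_2d_pt_mult.
      * apply continuity_2d_pt_opp, continuity_2d_pt_mult; apply continuity_2d_pt_id1.
      * apply continuity_2d_pt_plus; [apply continuity_2d_pt_const |].
        apply continuity_2d_pt_mult; apply continuity_2d_pt_id2.
Qed.

Lemma is_derive_gauss_aux x : is_derive gauss_aux x (- 2 * exp (- x ^ 2) * gauss_int x).
Proof.
  set (f := fun x u => exp (- x ^ 2 * (1 + u ^ 2)) / (1 + u ^ 2)).
  set (df := fun x u => - 2 * x * exp (- x ^ 2 * (1 + u ^ 2))).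
  assert (Hpos : forall u, 0 < 1 + u ^ 2) by (intros; nra).
  assert (Hdf : forall x u : R, is_derive (fun y => f y u) x (df x u)).
  { intros y u. unfold f, df. auto_derive; [generalize (Hpos u); lra |].
    simpl. field. generalize (Hpos u); simpl; lra. }
  (* Differentiate under the integral sign; the substitution [s = x u] then yields [gauss_int]. *)
  replace (- 2 * exp (- x ^ 2) * gauss_int x) with (RInt (fun u => Derive (fun y => f y u) x) 0 1).
  - apply (is_derive_RInt_param f 0 1 x).
    + apply filter_forall. intros y u _. eexists. apply Hdf.
    + intros u _. apply (continuity_2d_pt_ext df); [| apply continuity_2d_pt_gauss_aux_deriv].
      intros y v. symmetry. apply is_derive_unique, Hdf.
    + apply filter_forall. intros y. apply ex_RInt_continuous_R. intros u _.
      apply ex_derive_continuous_R. unfold f. auto_derive. generalize (Hpos u); lra.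
  - rewrite (RInt_ext _ (fun u => (- 2 * exp (- x ^ 2)) * scal x (exp (- (x * u + 0) ^ 2)))).
    2: { intros u _. transitivity (df x u); [apply is_derive_unique, Hdf |]. unfold df.
         change (scal x (exp (- (x * u + 0) ^ 2))) with (x * exp (- (x * u + 0) ^ 2)).
         replace (- x ^ 2 * (1 + u ^ 2)) with (- x ^ 2 + - (x * u + 0) ^ 2) by ring.
         rewrite exp_plus. ring_R. }
    assert (Hex : forall a b, ex_RInt (fun s => exp (- s ^ 2)) a b) by
      (intros; apply ex_RInt_continuous_R; intros; apply continuous_gauss).
    rewrite RInt_scal_R
      by apply (ex_RInt_comp_lin (V := R_NormedModule) (fun s => exp (- s ^ 2))), Hex.
    rewrite (RInt_comp_lin (V := R_CompleteNormedModule) (fun s => exp (- s ^ 2))) by apply Hex.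
    unfold gauss_int. now rewrite Rmult_0_r, Rmult_1_r, !Rplus_0_r.
Qed.

Lemma gauss_int_sqr_add_aux x : gauss_int x ^ 2 + gauss_aux x = PI / 4.
Proof.
  assert (H0 : gauss_int 0 ^ 2 + gauss_aux 0 = PI / 4).
  { rewrite gauss_int_0. unfold gauss_aux.
    rewrite (RInt_ext _ (fun u => / (1 + u ^ 2))).
    2: { intros u _. replace (- 0 ^ 2 * (1 + u ^ 2)) with 0 by ring. rewrite exp_0.
         change (1 / (1 + u ^ 2) = / (1 + u ^ 2)). unfold Rdiv. ring. }
    rewrite (RInt_derive_R atan).
    - rewrite atan_1, atan_0. ring.
    - intros u _. apply is_derive_Reals, derivable_pt_lim_atan.
    - intros u _. apply ex_derive_continuous_R. auto_derive. nra. }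
  rewrite <- H0. apply (eq_of_is_derive_0 (fun y => gauss_int y ^ 2 + gauss_aux y)).
  intros y.
  replace 0 with (INR 2 * exp (- y ^ 2) * gauss_int y ^ 1 + - 2 * exp (- y ^ 2) * gauss_int y)
    by (simpl; ring).
  apply (is_derive_plus (V := R_NormedModule) (fun y => gauss_int y ^ 2) gauss_aux).
  - apply is_derive_pow, is_derive_gauss_int.
  - apply is_derive_gauss_aux.
Qed.

Lemma gauss_aux_bounds x : 0 <= gauss_aux x <= exp (- x ^ 2).
Proof.
  assert (Hpos : forall u, 0 < 1 + u ^ 2) by (intros; nra).
  assert (Hex : ex_RInt (fun u => exp (- x ^ 2 * (1 + u ^ 2)) / (1 + u ^ 2)) 0 1).
  { apply ex_RInt_continuous_R. intros u _. apply ex_derive_continuous_R.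
    auto_derive. generalize (Hpos u); lra. }
  split.
  - apply RInt_ge_0; [lra | exact Hex |]. intros u _.
    apply Rle_mult_inv_pos; [left; apply exp_pos | apply Hpos].
  - replace (exp (- x ^ 2)) with (RInt (fun _ => exp (- x ^ 2)) 0 1).
    2: { rewrite (RInt_const (V := R_CompleteNormedModule)).
         change ((1 - 0) * exp (- x ^ 2) = exp (- x ^ 2)). ring. }
    apply RInt_le; [lra | exact Hex | apply ex_RInt_const |].
    intros u Hu. apply Rle_trans with (exp (- x ^ 2 * (1 + u ^ 2))).
    + unfold Rdiv. rewrite <- (Rmult_1_r (exp _)) at 2.
      apply Rmult_le_compat_l; [left; apply exp_pos |].
      rewrite <- Rinv_1. apply Rinv_le_contravar; [lra | nra].
    + apply exp_le_compat. nra.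
Qed.

Lemma is_lim_gauss_int : is_lim gauss_int p_infty (sqrt PI / 2).
Proof.
  assert (Haux : is_lim gauss_aux p_infty 0).
  { apply (is_lim_le_le_loc (fun _ => 0) (fun x => exp (- x ^ 2))).
    - exists 0. intros x _. apply gauss_aux_bounds.
    - apply is_lim_const.
    - exact is_lim_exp_opp_sqr. }
  replace (sqrt PI / 2) with (sqrt (PI / 4 - 0)).
  2: { rewrite Rminus_0_r, sqrt_div_alt by lra. f_equal.
       replace 4 with (2 * 2) by ring. apply sqrt_square. lra. }
  apply (is_lim_ext_loc (fun x => sqrt (PI / 4 - gauss_aux x))).
  - exists 0. intros x Hx. rewrite <- (gauss_int_sqr_add_aux x).
    replace (gauss_int x ^ 2 + gauss_aux x - gauss_aux x) with (gauss_int x ^ 2) by ring.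
    apply sqrt_pow2, gauss_int_nonneg. lra.
  - apply (is_lim_comp_continuous (fun x => PI / 4 - gauss_aux x) sqrt).
    + apply is_lim_minus'; [apply is_lim_const | exact Haux].
    + apply continuous_sqrt.
Qed.

Lemma gauss_int_tail a : 0 < a -> Rabs (sqrt PI / 2 - gauss_int a) <= exp (- a ^ 2) / (2 * a).
Proof.
  intros Ha.
  (* On [s >= a], [e^(-s^2) <= (s / a) e^(-s^2)], and the latter has an explicit primitive. *)
  apply (is_lim_RInt_abs_le (fun s => exp (- s ^ 2)) (fun s => s / a * exp (- s ^ 2)) a).
  - intros; apply continuous_gauss.
  - intros x _. apply ex_derive_continuous_R. auto_derive. lra.
  - intros x Hx. rewrite Rabs_pos_eq by (left; apply exp_pos).
    rewrite <- (Rmult_1_l (exp _)) at 1. apply Rmult_le_compat_r; [left; apply exp_pos |].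
    apply (Rmult_le_reg_r a); [exact Ha |]. unfold Rdiv. rewrite Rmult_assoc, Rinv_l; lra.
  - apply (is_lim_ext (fun x => gauss_int x - gauss_int a)).
    + intros x. unfold gauss_int.
      rewrite <- (RInt_Chasles_R _ 0 a x)
        by (apply ex_RInt_continuous_R; intros; apply continuous_gauss).
      ring.
    + apply is_lim_minus'; [exact is_lim_gauss_int | apply is_lim_const].
  - apply (is_lim_ext (fun x => (exp (- a ^ 2) - exp (- x ^ 2)) * / (2 * a))).
    + intros x. rewrite (RInt_derive_R (fun s => - exp (- s ^ 2) / (2 * a))); [field; lra | |].
      * intros s _. auto_derive; [lra | simpl; field; lra].
      * intros s _. apply ex_derive_continuous_R. auto_derive. lra.
    + replace (exp (- a ^ 2) / (2 * a)) with ((exp (- a ^ 2) - 0) * / (2 * a))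
        by (unfold Rdiv; ring).
      apply (is_lim_scal_r _ (/ (2 * a)) p_infty (exp (- a ^ 2) - 0)).
      apply is_lim_minus'; [apply is_lim_const | exact is_lim_exp_opp_sqr].
Qed.

Lemma sqrt_PI_ge_1 : 1 <= sqrt PI.
Proof. rewrite <- sqrt_1. apply sqrt_le_1_alt. generalize PI2_1. lra. Qed.

Lemma inv_sqrt_PI_bounds : 0 < / sqrt PI <= 1.
Proof.
  assert (H := sqrt_PI_ge_1). split; [apply Rinv_0_lt_compat; lra |].
  rewrite <- Rinv_1. apply Rinv_le_contravar; lra.
Qed.

Lemma erfc_gauss_int a : erfc a = 1 - 2 / sqrt PI * gauss_int a.
Proof.
  unfold erfc.
  rewrite (is_RInt_unique (V := R_CompleteNormedModule) _ _ _ _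
             (is_RInt_RInt_diff (fun s => exp (- s ^ 2)) (- a) a continuous_gauss)).
  fold (gauss_int a) (gauss_int (- a)). rewrite gauss_int_opp. unfold Rdiv. ring.
Qed.

(** * The exponential integral *)

Lemma continuous_exp_opp_div x : 0 < x -> continuous (fun s => exp (- s) / s) x.
Proof. intros Hx. apply ex_derive_continuous_R. auto_derive. lra. Qed.

Lemma exp_opp_div_le z s : 0 < z <= s -> Rabs (exp (- s) / s) <= / z * exp (- s).
Proof.
  intros Hzs. rewrite Rabs_pos_eq by (apply Rlt_le, Rdiv_lt_0_compat; [apply exp_pos | lra]).
  unfold Rdiv. rewrite Rmult_comm. apply Rmult_le_compat_r; [left; apply exp_pos |].
  apply Rinv_le_contravar; lra.
Qed.

Lemma is_lim_RInt_E_1 z :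
  0 < z -> is_lim (fun x => RInt (fun s => exp (- s) / s) z x) p_infty (E_1 z).
Proof.
  intros Hz. set (f := fun s => exp (- s) / s).
  destruct (is_lim_RInt_dominated f (fun s => / z * exp (- s)) z (/ z * exp (- z)))
    as [l Hl].
  - intros x Hx. apply continuous_exp_opp_div. lra.
  - intros x _. apply ex_derive_continuous_R. auto_derive. exact I.
  - exists z. intros x Hx. apply exp_opp_div_le. lra.
  - apply is_lim_RInt_exp_opp.
  - replace (E_1 z) with l; [exact Hl |]. symmetry.
    apply (is_RInt_gen_unique (V := R_CompleteNormedModule)). rewrite <- (Rminus_0_r l).
    apply (is_RInt_gen_primitive f (fun x => RInt f z x)).
    + apply (Filter_prod _ _ _ (fun a => a = z) (fun b => 0 < b)); [reflexivity | exists 0; auto |].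
      intros a b -> Hb. simpl. rewrite RInt_point, Rminus_0_r.
      apply RInt_correct_R, ex_RInt_continuous_pos; [exact Hz | exact Hb |].
      apply continuous_exp_opp_div.
    + intros P HP. unfold filtermap, at_point. rewrite RInt_point. apply locally_singleton, HP.
    + exact Hl.
Qed.

Lemma E_1_bound z : 0 < z -> Rabs (E_1 z) <= exp (- z) / z.
Proof.
  intros Hz. replace (exp (- z) / z) with (/ z * exp (- z)) by (unfold Rdiv; ring).
  apply (is_lim_RInt_abs_le (fun s => exp (- s) / s) (fun s => / z * exp (- s)) z).
  - intros x Hx. apply continuous_exp_opp_div. lra.
  - intros x _. apply ex_derive_continuous_R. auto_derive. exact I.
  - intros x Hx. apply exp_opp_div_le. lra.
  - apply is_lim_RInt_E_1, Hz.
  - apply is_lim_RInt_exp_opp.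
Qed.

Lemma E_1_Chasles z y :
  0 < z -> 0 < y -> E_1 z = RInt (fun s => exp (- s) / s) z y + E_1 y.
Proof.
  intros Hz Hy.
  assert (Hlim : is_lim (fun x => RInt (fun s => exp (- s) / s) z x) p_infty
                   (RInt (fun s => exp (- s) / s) z y + E_1 y)).
  { apply (is_lim_ext_loc (fun x => RInt (fun s => exp (- s) / s) z y
                                  + RInt (fun s => exp (- s) / s) y x)).
    - exists 0. intros x Hx.
      apply RInt_Chasles_R; apply ex_RInt_continuous_pos; auto; apply continuous_exp_opp_div.
    - apply is_lim_plus'; [apply is_lim_const | exact (is_lim_RInt_E_1 y Hy)]. }
  exact (filterlim_locally_unique (F := Rbar_locally p_infty) _ _ _ (is_lim_RInt_E_1 z Hz) Hlim).
Qed.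

Lemma is_derive_E_1 z : 0 < z -> is_derive E_1 z (- (exp (- z) / z)).
Proof.
  intros Hz.
  apply (is_derive_ext_loc (fun y => E_1 1 - RInt (fun s => exp (- s) / s) 1 y)).
  - apply (filter_imp (fun y => 0 < y)); [| exact (open_gt 0 z Hz)].
    intros y Hy. rewrite (E_1_Chasles y 1 Hy Rlt_0_1).
    rewrite <- (opp_RInt_swap (V := R_CompleteNormedModule)).
    + change (E_1 1 - - RInt (fun s => exp (- s) / s) y 1
              = RInt (fun s => exp (- s) / s) y 1 + E_1 1).
      ring.
    + apply ex_RInt_continuous_pos; [exact Hy | exact Rlt_0_1 | apply continuous_exp_opp_div].
  - replace (- (exp (- z) / z)) with (0 - exp (- z) / z) by ring.
    apply (is_derive_minus (V := R_NormedModule) (fun _ => E_1 1));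
      [exact (is_derive_const (K := R_AbsRing) (V := R_NormedModule) (E_1 1) z) |].
    apply (is_derive_RInt (fun s => exp (- s) / s) _ 1).
    + apply (filter_imp (fun y => 0 < y)); [| exact (open_gt 0 z Hz)].
      intros y Hy. apply RInt_correct_R, ex_RInt_continuous_pos; [exact Rlt_0_1 | exact Hy |].
      apply continuous_exp_opp_div.
    + apply continuous_exp_opp_div, Hz.
Qed.

Lemma E_1_le_ln z : 0 < z <= 1 -> Rabs (E_1 z) <= Rabs (E_1 1) - ln z.
Proof.
  intros Hz. rewrite (E_1_Chasles z 1) by lra.
  assert (Hex : ex_RInt (fun s => exp (- s) / s) z 1)
    by (apply ex_RInt_continuous_pos; [lra | lra | apply continuous_exp_opp_div]).
  assert (Hnonneg : 0 <= RInt (fun s => exp (- s) / s) z 1).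
  { apply RInt_ge_0; [lra | exact Hex |]. intros s Hs.
    apply Rlt_le, Rdiv_lt_0_compat; [apply exp_pos | lra]. }
  assert (Hle : RInt (fun s => exp (- s) / s) z 1 <= - ln z).
  { apply Rle_trans with (RInt (fun s => / s) z 1).
    - apply RInt_le; [lra | exact Hex | |].
      + apply ex_RInt_continuous_pos; [lra | lra |]. intros s Hs.
        apply ex_derive_continuous_R. auto_derive. lra.
      + intros s Hs. unfold Rdiv. rewrite <- (Rmult_1_l (/ s)) at 2.
        apply Rmult_le_compat_r; [left; apply Rinv_0_lt_compat; lra |].
        rewrite <- exp_0. apply exp_le_compat. lra.
    - rewrite (RInt_derive_R ln); [rewrite ln_1; lra | |].
      + intros s Hs. apply is_derive_ln. generalize (Rmin_glb_lt z 1 0 (proj1 Hz) Rlt_0_1). lra.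
      + intros s Hs. apply ex_derive_continuous_R. auto_derive.
        generalize (Rmin_glb_lt z 1 0 (proj1 Hz) Rlt_0_1). lra. }
  eapply Rle_trans; [apply Rabs_triang |]. rewrite Rabs_pos_eq by exact Hnonneg. lra.
Qed.

(** * The radial profile of the kernel *)

Definition profile (a : R) : R := erfc a - / sqrt PI * a * E_1 (a ^ 2).

Lemma profile_0 : profile 0 = 1.
Proof. unfold profile. rewrite erfc_gauss_int, gauss_int_0. ring. Qed.

Lemma is_derive_profile a : a <> 0 -> is_derive profile a (- / sqrt PI * E_1 (a ^ 2)).
Proof.
  intros Ha. assert (Hsq : 0 < a ^ 2) by (apply pow2_gt_0, Ha).
  apply (is_derive_ext (fun y => 1 - 2 / sqrt PI * gauss_int y - / sqrt PI * y * E_1 (y ^ 2))).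
  { intros y. unfold profile. now rewrite erfc_gauss_int. }
  assert (HPI : 0 < sqrt PI) by (generalize sqrt_PI_ge_1; lra).
  auto_derive.
  - split; [eexists; apply is_derive_gauss_int |].
    split; [eexists; apply is_derive_E_1, Hsq | exact I].
  - replace (Derive (fun x : R => gauss_int x) a) with (exp (- a ^ 2))
      by (symmetry; apply is_derive_unique, is_derive_gauss_int).
    replace (Derive (fun x : R => E_1 x) (a * (a * 1))) with (- (exp (- a ^ 2) / a ^ 2))
      by (symmetry; apply is_derive_unique, is_derive_E_1, Hsq).
    simpl. field. split; [lra | exact Ha].
Qed.

Lemma profile_near_0 a :
  Rabs a <= 1 -> Rabs (profile a - 1) <= (2 + Rabs (E_1 1)) * Rabs a + 4 * sqrt (Rabs a).
Proof.
  intros Ha1.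
  destruct (Req_dec a 0) as [-> | Ha].
  { rewrite profile_0, Rminus_diag, Rabs_R0, sqrt_0. lra. }
  assert (Hb := Rabs_pos_lt a Ha). set (b := Rabs a) in *.
  assert (HE : Rabs (a * E_1 (a ^ 2)) <= Rabs (E_1 1) * b + 4 * sqrt b).
  { rewrite Rabs_mult. fold b. rewrite <- (pow2_abs a). fold b.
    assert (Hb2 : 0 < b ^ 2 <= 1) by (split; [apply pow_lt, Hb | nra]).
    assert (H := E_1_le_ln (b ^ 2) Hb2). assert (H' := mul_ln_sqr_ge b Hb). nra. }
  assert (HG := gauss_int_abs_le a). fold b in HG.
  assert (HPI := sqrt_PI_ge_1).
  unfold profile. rewrite erfc_gauss_int.
  replace (1 - 2 / sqrt PI * gauss_int a - / sqrt PI * a * E_1 (a ^ 2) - 1)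
    with (- (/ sqrt PI * (2 * gauss_int a + a * E_1 (a ^ 2)))) by (unfold Rdiv; ring).
  rewrite Rabs_Ropp, Rabs_mult, Rabs_inv, (Rabs_pos_eq (sqrt PI)) by lra.
  assert (Hinv := inv_sqrt_PI_bounds).
  assert (Hsum : Rabs (2 * gauss_int a + a * E_1 (a ^ 2))
                 <= 2 * b + (Rabs (E_1 1) * b + 4 * sqrt b)).
  { eapply Rle_trans; [apply Rabs_triang |]. rewrite Rabs_mult, (Rabs_pos_eq 2) by lra. lra. }
  assert (H0 := Rabs_pos (2 * gauss_int a + a * E_1 (a ^ 2))). nra.
Qed.

Lemma continuous_profile a : continuous profile a.
Proof.
  destruct (Req_dec a 0) as [-> | Ha].
  2: { apply ex_derive_continuous_R. eexists. apply is_derive_profile, Ha. }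
  set (B := fun x => (2 + Rabs (E_1 1)) * Rabs x + 4 * sqrt (Rabs x)).
  assert (HB : forall s, filterlim (fun x => 1 + s * B x) (locally 0) (locally 1)).
  { intros s.
    assert (H : continuous (fun x => 1 + s * B x) 0).
    { apply (continuous_plus (V := R_NormedModule) (fun _ => 1)); [apply continuous_const |].
      apply (continuous_mult (K := R_AbsRing) (fun _ => s)); [apply continuous_const |].
      apply (continuous_plus (V := R_NormedModule)).
      - apply (continuous_mult (K := R_AbsRing) (fun _ => _));
          [apply continuous_const | apply continuous_Rabs].
      - apply (continuous_mult (K := R_AbsRing) (fun _ => _));
          [apply continuous_const | apply continuous_sqrt_comp, continuous_Rabs]. }
    unfold continuous in H. unfold B in H at 2.
    rewrite Rabs_R0, sqrt_0, !Rmult_0_r, !Rplus_0_r, Rmult_0_r, Rplus_0_r in H. exact H. }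
  unfold continuous. rewrite profile_0. change (filterlim profile (locally 0) (Rbar_locally 1)).
  apply (filterlim_le_le (F := locally 0) (fun x => 1 + -1 * B x) profile (fun x => 1 + 1 * B x)).
  - exists (mkposreal 1 Rlt_0_1). intros x Hx. change (Rabs (x - 0) < 1) in Hx.
    rewrite Rminus_0_r in Hx.
    assert (H := profile_near_0 x ltac:(lra)). fold (B x) in H.
    apply Rabs_le_between' in H. lra.
  - exact (HB (-1)).
  - exact (HB 1).
Qed.

Lemma profile_le_exp a : 1 <= a -> Rabs (profile a) <= 2 * exp (- a).
Proof.
  intros Ha.
  assert (HPI := sqrt_PI_ge_1).
  assert (HT := gauss_int_tail a ltac:(lra)).
  assert (HE := E_1_bound (a ^ 2) ltac:(nra)).
  assert (He : exp (- a ^ 2) <= exp (- a)) by (apply exp_le_compat; nra).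
  assert (He0 := exp_pos (- a ^ 2)).
  assert (Hdiv : exp (- a ^ 2) / a <= exp (- a ^ 2)).
  { unfold Rdiv. rewrite <- (Rmult_1_r (exp (- a ^ 2))) at 2.
    apply Rmult_le_compat_l; [lra |]. rewrite <- Rinv_1. apply Rinv_le_contravar; lra. }
  unfold profile. rewrite erfc_gauss_int.
  replace (1 - 2 / sqrt PI * gauss_int a - / sqrt PI * a * E_1 (a ^ 2))
    with (/ sqrt PI * (2 * (sqrt PI / 2 - gauss_int a) - a * E_1 (a ^ 2))) by (field; lra).
  rewrite Rabs_mult, Rabs_inv, (Rabs_pos_eq (sqrt PI)) by lra.
  assert (Hsum : Rabs (2 * (sqrt PI / 2 - gauss_int a) - a * E_1 (a ^ 2)) <= 2 * exp (- a)).
  { unfold Rminus at 1. eapply Rle_trans; [apply Rabs_triang |].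
    rewrite Rabs_Ropp, !Rabs_mult, (Rabs_pos_eq 2), (Rabs_pos_eq a) by lra.
    apply Rle_trans with (exp (- a ^ 2) / a + exp (- a ^ 2) / a); [| lra].
    apply Rplus_le_compat.
    - apply Rle_trans with (2 * (exp (- a ^ 2) / (2 * a))); [lra | right; field; lra].
    - apply Rle_trans with (a * (exp (- a ^ 2) / a ^ 2)).
      + apply Rmult_le_compat_l; lra.
      + right. field. lra. }
  assert (Hinv := inv_sqrt_PI_bounds).
  assert (H0 := Rabs_pos (2 * (sqrt PI / 2 - gauss_int a) - a * E_1 (a ^ 2))). nra.
Qed.

Lemma is_lim_profile_mul_bounded (u : R -> R) :
  (forall y, Rabs (u y) <= 1) -> is_lim (fun y => profile y * u y) p_infty 0.
Proof.
  intros Hu.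
  assert (H2 : is_lim (fun y => 2 * exp (- y)) p_infty 0).
  { replace (Finite 0) with (Rbar_mult 2 0) by (simpl; f_equal; ring).
    apply is_lim_scal_l, is_lim_exp_opp. }
  apply (is_lim_le_le_loc (fun y => - (2 * exp (- y))) (fun y => 2 * exp (- y))).
  - exists 1. intros y Hy. apply Rabs_le_between. rewrite Rabs_mult.
    assert (H := profile_le_exp y ltac:(lra)). assert (Huy := Hu y).
    generalize (Rabs_pos (profile y)) (Rabs_pos (u y)). nra.
  - replace (Finite 0) with (Rbar_opp 0) by (simpl; f_equal; ring).
    apply is_lim_opp, H2.
  - exact H2.
Qed.

Lemma continuous_profile_abs_mul (u : R -> R) x :
  (forall y, continuous u y) -> continuous (fun a => profile (Rabs a) * u a) x.
Proof.
  intros Hu. apply (continuous_mult (K := R_AbsRing) (fun a => profile (Rabs a)) u); [| apply Hu].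
  apply continuous_comp; [apply continuous_Rabs | apply continuous_profile].
Qed.

Lemma is_lim_RInt_profile_mul (u : R -> R) :
  (forall x, continuous u x) -> (forall x, Rabs (u x) <= 1) ->
  exists l : R, is_lim (fun x => RInt (fun a => profile (Rabs a) * u a) 0 x) p_infty l.
Proof.
  intros Hu Hb.
  apply (is_lim_RInt_dominated _ (fun s => 2 * exp (- s)) 0 (2 * exp (- 0))).
  - intros x _. apply continuous_profile_abs_mul, Hu.
  - intros x _. apply ex_derive_continuous_R. auto_derive. exact I.
  - exists 1. intros x Hx. rewrite Rabs_mult, (Rabs_pos_eq x) by lra.
    assert (H := profile_le_exp x Hx). assert (Hux := Hb x).
    generalize (Rabs_pos (profile x)) (Rabs_pos (u x)). nra.
  - apply is_lim_RInt_exp_opp.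
Qed.

Lemma kernel_profile sigma r : 0 < sigma -> kernel sigma r = profile (Rabs (r / (sigma * sqrt 2))).
Proof.
  intros Hs. assert (Hs2 : 0 < sqrt 2) by (apply sqrt_lt_R0; lra).
  rewrite Rabs_div, (Rabs_pos_eq (sigma * sqrt 2)) by nra.
  unfold kernel. destruct (Req_EM_T r 0) as [-> | Hr].
  - rewrite Rabs_R0, Rdiv_0_l. symmetry. apply profile_0.
  - unfold profile.
    replace ((Rabs r / (sigma * sqrt 2)) ^ 2) with (r ^ 2 / (2 * sigma ^ 2)); [reflexivity |].
    replace ((Rabs r / (sigma * sqrt 2)) ^ 2) with (Rabs r ^ 2 / (sigma ^ 2 * sqrt 2 ^ 2))
      by (field; lra).
    rewrite pow2_abs, pow2_sqrt by lra. field. lra.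
Qed.

(** * The Fourier transform of the kernel *)

Lemma kernel_mul_trig (sigma t : R) (u : R -> R) (r : R) :
  0 < sigma ->
  kernel sigma r * u (r * t)
  = profile (Rabs (r / (sigma * sqrt 2))) * u (sigma * sqrt 2 * t * (r / (sigma * sqrt 2))).
Proof.
  intros Hs. assert (Hs2 : 0 < sqrt 2) by (apply sqrt_lt_R0; lra).
  rewrite kernel_profile by exact Hs. do 2 f_equal. field. lra.
Qed.

Lemma is_RInt_gen_kernel_cos (sigma t l : R) :
  0 < sigma ->
  is_lim (fun x => RInt (fun a => profile (Rabs a) * cos (sigma * sqrt 2 * t * a)) 0 x) p_infty l ->
  is_RInt_gen (fun r => kernel sigma r * cos (r * t))
    (Rbar_locally m_infty) (Rbar_locally p_infty) (2 * (sigma * sqrt 2 * l)).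
Proof.
  intros Hs Hl. set (c := sigma * sqrt 2) in *.
  assert (Hc : 0 < c) by (apply Rmult_lt_0_compat; [lra | apply sqrt_lt_R0; lra]).
  set (h := fun a => profile (Rabs a) * cos (c * t * a)).
  assert (Hh : forall x, continuous h x).
  { intros x. apply continuous_profile_abs_mul. intros y.
    apply ex_derive_continuous_R. auto_derive. exact I. }
  apply (is_RInt_gen_ext (fun r => h (r / c))).
  { apply filter_forall. intros ab x _. symmetry. apply (kernel_mul_trig sigma t cos x Hs). }
  apply is_RInt_gen_even.
  - intros x. apply (continuous_comp (fun r => r / c) h); [| apply Hh].
    apply ex_derive_continuous_R. auto_derive. lra.
  - intros x. unfold h. replace (- x / c) with (- (x / c)) by (field; lra).
    rewrite Rabs_Ropp. replace (c * t * - (x / c)) with (- (c * t * (x / c))) by ring.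
    now rewrite cos_neg.
  - apply is_lim_RInt_rescale; [exact Hc | exact Hh | exact Hl].
Qed.

Lemma is_RInt_gen_kernel_sin (sigma t : R) :
  0 < sigma ->
  is_RInt_gen (fun r => kernel sigma r * sin (r * t))
    (Rbar_locally m_infty) (Rbar_locally p_infty) 0.
Proof.
  intros Hs. set (c := sigma * sqrt 2).
  assert (Hc : 0 < c) by (apply Rmult_lt_0_compat; [lra | apply sqrt_lt_R0; lra]).
  set (h := fun a => profile (Rabs a) * sin (c * t * a)).
  assert (Hsin : forall x, continuous (fun a => sin (c * t * a)) x).
  { intros x. apply ex_derive_continuous_R. auto_derive. exact I. }
  assert (Hh : forall x, continuous h x) by (intros x; apply continuous_profile_abs_mul, Hsin).
  destruct (is_lim_RInt_profile_mul (fun a => sin (c * t * a)) Hsin) as [l Hl].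
  { intros x. apply Rabs_le, SIN_bound. }
  apply (is_RInt_gen_ext (fun r => h (r / c))).
  { apply filter_forall. intros ab x _. symmetry. apply (kernel_mul_trig sigma t sin x Hs). }
  apply (is_RInt_gen_odd _ (c * l)).
  - intros x. apply (continuous_comp (fun r => r / c) h); [| apply Hh].
    apply ex_derive_continuous_R. auto_derive. lra.
  - intros x. unfold h. replace (- x / c) with (- (x / c)) by (field; lra).
    rewrite Rabs_Ropp. replace (c * t * - (x / c)) with (- (c * t * (x / c))) by ring.
    rewrite sin_neg. ring.
  - apply is_lim_RInt_rescale; [exact Hc | exact Hh | exact Hl].
Qed.

Lemma is_derive_RInt_profile_cos (w x : R) :
  is_derive (fun y => RInt (fun a => profile (Rabs a) * cos (w * a)) 0 y) x
    (profile (Rabs x) * cos (w * x)).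
Proof.
  apply (is_derive_RInt_0 (fun a => profile (Rabs a) * cos (w * a))).
  intros y. apply continuous_profile_abs_mul. intros z.
  apply ex_derive_continuous_R. auto_derive. exact I.
Qed.

(* Integration by parts: [- sqrt PI * profile] is a primitive of [E_1 (a ^ 2)] on [a > 0]. *)
Definition E_1_sin_primitive (w y : R) : R :=
  sqrt PI * (w * RInt (fun a => profile (Rabs a) * cos (w * a)) 0 y - profile y * sin (w * y)).

Lemma is_derive_E_1_sin_primitive (w y : R) :
  0 < y -> is_derive (E_1_sin_primitive w) y (E_1 (y ^ 2) * sin (w * y)).
Proof.
  intros Hy. assert (HPI : 0 < sqrt PI) by (generalize sqrt_PI_ge_1; lra).
  pose (C := fun x => RInt (fun a => profile (Rabs a) * cos (w * a)) 0 x).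
  change (is_derive (fun y => sqrt PI * (w * C y - profile y * sin (w * y))) y
            (E_1 (y ^ 2) * sin (w * y))).
  auto_derive.
  - split; [eexists; apply is_derive_RInt_profile_cos |].
    split; [eexists; apply is_derive_profile; lra | exact I].
  - replace (Derive (fun x => C x) y) with (profile (Rabs y) * cos (w * y))
      by (symmetry; apply is_derive_unique, is_derive_RInt_profile_cos).
    replace (Derive (fun x : R => profile x) y) with (- / sqrt PI * E_1 (y ^ 2))
      by (symmetry; apply is_derive_unique, is_derive_profile; lra).
    rewrite Rabs_pos_eq by lra. field. lra.
Qed.

Lemma continuous_E_1_sin_primitive (w x : R) : continuous (E_1_sin_primitive w) x.
Proof.
  apply (continuous_mult (K := R_AbsRing) (fun _ => sqrt PI)); [apply continuous_const |].
  apply (continuous_plus (V := R_NormedModule)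
           (fun y => w * RInt (fun a => profile (Rabs a) * cos (w * a)) 0 y)).
  - apply (continuous_mult (K := R_AbsRing) (fun _ => w)); [apply continuous_const |].
    apply ex_derive_continuous_R. eexists. apply is_derive_RInt_profile_cos.
  - apply (continuous_opp (V := R_NormedModule) (fun y => profile y * sin (w * y))).
    apply (continuous_mult (K := R_AbsRing)); [apply continuous_profile |].
    apply ex_derive_continuous_R. auto_derive. exact I.
Qed.

Lemma E_1_sin_primitive_0 w : E_1_sin_primitive w 0 = 0.
Proof.
  unfold E_1_sin_primitive.
  rewrite Rmult_0_r, sin_0, profile_0, (RInt_point (V := R_CompleteNormedModule)).
  change (sqrt PI * (w * 0 - 1 * 0) = 0). ring.
Qed.

Lemma is_RInt_gen_E_1_sin (w l : R) :
  is_lim (fun x => RInt (fun a => profile (Rabs a) * cos (w * a)) 0 x) p_infty l ->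
  is_RInt_gen (fun r => E_1 (r ^ 2) * sin (w * r))
    (at_right 0) (Rbar_locally p_infty) (sqrt PI * (w * l)).
Proof.
  intros Hl.
  replace (sqrt PI * (w * l)) with (sqrt PI * (w * l - 0) - E_1_sin_primitive w 0)
    by (rewrite E_1_sin_primitive_0; ring).
  apply (is_RInt_gen_primitive _ (E_1_sin_primitive w)).
  - apply (Filter_prod _ _ _ (fun a => 0 < a) (fun b => 0 < b)).
    + exists (mkposreal 1 Rlt_0_1). intros y _ Hy. exact Hy.
    + exists 0. auto.
    + intros a b Ha Hb. cbn [fst snd].
      assert (Hab : forall x, Rmin a b <= x <= Rmax a b -> 0 < x).
      { intros x Hx. generalize (Rmin_glb_lt a b 0 Ha Hb). lra. }
      apply is_RInt_derive_R.
      * intros x Hx. apply is_derive_E_1_sin_primitive, Hab, Hx.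
      * intros x Hx. apply (continuous_mult (K := R_AbsRing)).
        -- apply (continuous_comp (fun y => y ^ 2) E_1).
           ++ apply ex_derive_continuous_R. auto_derive. exact I.
           ++ apply ex_derive_continuous_R. eexists. apply is_derive_E_1.
              assert (H := Hab x Hx). nra.
        -- apply ex_derive_continuous_R. auto_derive. exact I.
  - exact (filterlim_filter_le_1 _ (filter_le_within (F := locally 0) (fun u => 0 < u))
             (continuous_E_1_sin_primitive w 0)).
  - unfold E_1_sin_primitive.
    apply (is_lim_scal_l (fun y => w * RInt (fun a => profile (Rabs a) * cos (w * a)) 0 y
                                   - profile y * sin (w * y)) (sqrt PI) p_infty (w * l - 0)).
    apply is_lim_minus'; [apply (is_lim_scal_l _ w p_infty l), Hl |].
    apply (is_lim_profile_mul_bounded (fun y => sin (w * y))).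
    intros y. apply Rabs_le, SIN_bound.
Qed.

Theorem theorem5 (sigma t : R) (Hsigma : 0 < sigma) (Ht : t <> 0) :
  exists J : R,
    is_RInt_gen (fun r => E_1 (r ^ 2) * sin (sigma * sqrt 2 * t * r))
      (at_right 0) (Rbar_locally p_infty) J /\
    is_RInt_gen (V := C_R_NormedModule)
      (fun r : R => ((kernel sigma r * cos (r * t))%R, (kernel sigma r * sin (r * t))%R) : C)
      (Rbar_locally m_infty) (Rbar_locally p_infty)
      ((2 / (t * sqrt PI) * J)%R, 0%R).
Proof.
  set (w := sigma * sqrt 2 * t).
  assert (Hcos : forall x, continuous (fun a => cos (w * a)) x).
  { intros x. apply ex_derive_continuous_R. auto_derive. exact I. }
  destruct (is_lim_RInt_profile_mul (fun a => cos (w * a)) Hcos) as [l Hl].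
  { intros x. apply Rabs_le, COS_bound. }
  exists (sqrt PI * (w * l)). split.
  - exact (is_RInt_gen_E_1_sin w l Hl).
  - replace (2 / (t * sqrt PI) * (sqrt PI * (w * l))) with (2 * (sigma * sqrt 2 * l)).
    + apply is_RInt_gen_pair.
      * exact (is_RInt_gen_kernel_cos sigma t l Hsigma Hl).
      * exact (is_RInt_gen_kernel_sin sigma t Hsigma).
    + unfold w. field. split; [| exact Ht].
      generalize sqrt_PI_ge_1. lra.
Qed.
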